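(* Let $S\subseteq\{0,1\}^n$, $f\in[0,1/2]$, $m>0$, $T>0$ integers, and let $h_m^1,\dots,h_m^T$ be hash functions sampled independently from $\mathcal{H}^f_{m\times n}$. Let $Y_k=\mathbb{I}[S(h_m^k)\ge1]$, $Y=\sum_{k=1}^T Y_k$, and $\Pr_{\mathrm{est}}[S(h)\ge1]=Y/T$. Let $\kappa>0$ and $c>0$. Define the random variable $\mathcal{B}$ to equal $\frac{2^m c}{1+\kappa}$ if $\Pr_{\mathrm{est}}[S(h)\ge1]\ge c$, and $0$ otherwise. Then $$\Pr\left[|S|\ge\mathcal{B}\right]\ge 1-\exp\left(-\frac{\kappa^2cT}{(1+\kappa)(2+\kappa)}\right).$$
   Context: For integers $1\le m\le n$ and $f\in[0,1/2]$, sampling $h$ from $\mathcal{H}^f_{m\times n}$ means $h(x)=Ax+b\bmod 2$ with $A\in\{0,1\}^{m\times n}$ having i.i.d. entries with $\Pr[A_{ij}=1]=f$ and $b\in\{0,1\}^m$ uniform and independent of $A$. For $S\subseteq\{0,1\}^n$, $S(h)=|\{x\in S:h(x)=0\}|$. *)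

From HB Require Import structures.
From mathcomp Require Import all_boot all_order all_algebra.
From mathcomp Require Import reals.
From mathcomp Require Import sequences exp.
Set Implicit Arguments. Unset Strict Implicit. Unset Printing Implicit Defensive.
Import Order.TTheory GRing.Theory Num.Theory.
Local Open Scope ring_scope.

Notation vec n := 'cV['F_2]_n.

(* A hash function h(x) = A x + b mod 2 is given by the pair (A, b). *)
Definition hashT (m n : nat) : finType :=
  ('M['F_2]_(m, n) * 'cV['F_2]_m)%type.

Definition hash_apply (m n : nat) (h : hashT m n) (x : vec n) : vec m :=
  h.1 *m x + h.2.

Definition Sh (m n : nat) (S : {set vec n}) (h : hashT m n) : nat :=
  #|[set x in S | hash_apply h x == 0]|.

(* Probability mass of h = (A,b) under H^f_{m x n}: entries of A i.i.d.
   Bernoulli(f), b uniform and independent of A. *)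
Definition hash_weight (R : realType) (f : R) (m n : nat) (h : hashT m n) : R :=
  (\prod_(i < m) \prod_(j < n) (if h.1 i j == 1 then f else 1 - f))
  / (2 ^+ m).

Definition sampleT (m n T : nat) : finType := {ffun 'I_T -> hashT m n}.

Definition sample_weight (R : realType) (f : R) (m n T : nat)
  (w : sampleT m n T) : R :=
  \prod_(k < T) hash_weight f (w k).

Definition PrT (R : realType) (f : R) (m n T : nat) (E : pred (sampleT m n T)) : R :=
  \sum_(w : sampleT m n T | E w) sample_weight f w.

Definition Ycount (m n T : nat) (S : {set vec n}) (w : sampleT m n T) : nat :=
  \sum_(k < T) (0 < Sh S (w k))%N.

Definition Pr_est (R : realType) (m n T : nat) (S : {set vec n})
  (w : sampleT m n T) : R :=
  (Ycount S w)%:R / T%:R.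

Definition Bvar (R : realType) (m n T : nat) (S : {set vec n}) (kappa c : R)
  (w : sampleT m n T) : R :=
  if c <= Pr_est R S w then 2 ^+ m * c / (1 + kappa) else 0.

From HB Require Import structures.
From mathcomp Require Import all_boot all_order all_algebra.
From mathcomp Require Import reals functions normedtype sequences derive exp.
From mathcomp Require Import ring lra.
Import Order.TTheory GRing.Theory Num.Theory.
Import numFieldNormedType.Exports.
Set Implicit Arguments. Unset Strict Implicit. Unset Printing Implicit Defensive.
Local Open Scope ring_scope.

(* If |S| >= 2^m c / (1 + kappa) the event holds surely. Otherwise, since b is
   uniform, every x in S satisfies h(x) = 0 with probability exactly 2^-m, so
   p := Pr[S(h) >= 1] <= E[S(h)] = |S| / 2^m < c / (1 + kappa). The event can
   only fail when Y >= cT, and the exponential Markov inequality with base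
   1 + kappa >= exp(2 kappa / (2 + kappa)), together with the independence of
   the draws, E[(1 + kappa)^Y] = (1 + kappa p)^T <= exp(kappa p T), bounds the
   probability of that tail by exp(- kappa^2 c T / ((1 + kappa)(2 + kappa))). *)

Section ExpBounds.
Variable R : realType.

Lemma mul1B_expR2_le1D (y : R) : 0 <= y -> (1 - y) * expR (2 * y) <= 1 + y.
Proof.
move=> y_ge0; rewrite (_ : 2 * y = y + y) ?expRD; last by ring.
pose F : R -> R := (cst 1 + id) - (cst 1 - id) * (expR * expR).
pose dF : R -> R := fun t => 1 + expR t * expR t - 2 * (1 - t) * (expR t * expR t).
have F_derive (t : R) : is_derive t 1 F (dF t).
  apply: is_derive_eq; rewrite /dF /= !fctE /cst /=.
  by rewrite !(_ : forall a b : R, a *: b = a * b) //; ring.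
(* dF t = 1 - expR (2 t) (1 - 2 t) >= 0 because expR (- 2 t) >= 1 - 2 t *)
have dF_ge0 (t : R) : 0 <= dF t.
  have e2t : expR t * expR t * expR (- (2 * t)) = 1.
    by rewrite -!expRD (_ : t + t + - (2 * t) = 0) ?expR0 //; ring.
  have := expR_ge1Dx (- (2 * t)); have := expR_gt0 t.
  move: e2t; rewrite /dF; set E := expR t * expR t; set E' := expR (- _).
  have : 0 < E by rewrite mulr_gt0 ?expR_gt0.
  nra.
have F_ge0 : 0 <= F y.
  have F0 : F 0 = 0 by rewrite /F /= !fctE /cst /= expR0; ring.
  rewrite -F0; apply: (@ger0_derive1_ndecr _ F 0 y) => //.
  - by move=> t _; rewrite derive1E derive_val.
  - by apply: derivable_within_continuous => t _; case: (F_derive t).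
by move: F_ge0; rewrite /F /= !fctE /cst /=; lra.
Qed.

Lemma expR_le1D (k : R) : 0 <= k -> expR (2 * k / (2 + k)) <= 1 + k.
Proof.
move=> k_ge0; have k2_gt0 : 0 < 2 + k by lra.
have := @mul1B_expR2_le1D (k / (2 + k)) (divr_ge0 k_ge0 (ltW k2_gt0)).
have -> : 1 - k / (2 + k) = 2 / (2 + k) by field; lra.
have -> : 1 + k / (2 + k) = 2 / (2 + k) * (1 + k) by field; lra.
by rewrite mulrA ler_pM2l ?divr_gt0.
Qed.

End ExpBounds.

Lemma Sh_sum (R : realType) (m n : nat) (S : {set vec n}) (h : hashT m n) :
  (Sh S h)%:R = \sum_(x in S) (hash_apply h x == 0)%:R :> R.
Proof.
rewrite /Sh -sum1_card natr_sum big_mkcond [RHS]big_mkcond /=.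
by apply: eq_bigr => x _; rewrite inE; case: (x \in S); case: (_ == 0).
Qed.

Section HashDistribution.
Variables (R : realType) (f : R) (m n : nat).
Hypotheses (f_ge0 : 0 <= f) (f_le1 : f <= 1).

Definition bit_weight (a : 'F_2) : R := if a == 1 then f else 1 - f.

Lemma bit_weight_ge0 (a : 'F_2) : 0 <= bit_weight a.
Proof. by rewrite /bit_weight; case: ifP; rewrite ?subr_ge0. Qed.

Lemma sum_bit_weight : \sum_(a : 'F_2) bit_weight a = 1.
Proof.
rewrite (bigD1 1) //= /bit_weight eqxx.
rewrite (eq_bigr (fun _ => 1 - f)) => [|a /negbTE -> //].
by rewrite sumr_const cardC1 card_Fp // mulr1n addrC subrK.
Qed.

Lemma sum_matrix_weight :
  \sum_(A : 'M['F_2]_(m, n)) \prod_(i < m) \prod_(j < n) bit_weight (A i j) = 1.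
Proof.
pose mx_of (g : {ffun 'I_m -> {ffun 'I_n -> 'F_2}}) := \matrix_(i, j) g i j.
rewrite (reindex mx_of); last first.
  exists (fun A : 'M['F_2]_(m, n) => [ffun i => [ffun j => A i j]]).
    by move=> g _; apply/ffunP => i; apply/ffunP => j; rewrite !ffunE mxE.
  by move=> A _; apply/matrixP => i j; rewrite mxE !ffunE.
under eq_bigr do under eq_bigr do under eq_bigr do rewrite mxE.
rewrite -(bigA_distr_bigA (fun i (r : {ffun 'I_n -> 'F_2}) =>
  \prod_(j < n) bit_weight (r j))).
apply: big1 => i _; rewrite -(bigA_distr_bigA (fun j => bit_weight)).
by apply: big1 => j _; exact: sum_bit_weight.
Qed.

Lemma hash_weight_ge0 (h : hashT m n) : 0 <= hash_weight f h.
Proof.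
rewrite divr_ge0 ?exprn_ge0 //.
by apply: prodr_ge0 => i _; apply: prodr_ge0 => j _; exact: bit_weight_ge0.
Qed.

Lemma sum_hash_weight : \sum_(h : hashT m n) hash_weight f h = 1.
Proof.
rewrite -(pair_bigA _ (fun A b => hash_weight f (A, b))) /= /hash_weight /=.
have divXnK (x : R) : x / 2 ^+ m *+ 2 ^ m = x.
  by rewrite -mulr_natr natrX mulfVK // expf_neq0 // pnatr_eq0.
under eq_bigr do rewrite sumr_const card_mx card_Fp // muln1 divXnK.
exact: sum_matrix_weight.
Qed.

(* Only the uniformity of b matters: for each A exactly one b sends x to 0. *)
Lemma hash_zero_prob (x : vec n) :
  \sum_(h : hashT m n) hash_weight f h * (hash_apply h x == 0)%:R = (2 ^+ m)^-1.
Proof.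
rewrite -(pair_bigA _ (fun A b => hash_weight f (A, b) * (hash_apply (A, b) x == 0)%:R)).
have -> : (2 ^+ m)^-1 = \sum_(A : 'M['F_2]_(m, n))
    \prod_(i < m) \prod_(j < n) bit_weight (A i j) / 2 ^+ m.
  by rewrite -mulr_suml sum_matrix_weight mul1r.
apply: eq_bigr => A _ /=.
rewrite (bigD1 (- (A *m x))) //= /hash_apply /= addrN eqxx mulr1 big1 ?addr0 //.
by move=> b b_neq; rewrite addrC addr_eq0 (negbTE b_neq) mulr0.
Qed.

Definition hit_prob (S : {set vec n}) : R :=
  \sum_(h : hashT m n) hash_weight f h * (0 < Sh S h)%N%:R.

Lemma hit_prob_ge0 (S : {set vec n}) : 0 <= hit_prob S.
Proof. by apply: sumr_ge0 => h _; rewrite mulr_ge0 ?hash_weight_ge0. Qed.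

Lemma hit_prob_le (S : {set vec n}) : hit_prob S <= #|S|%:R / 2 ^+ m.
Proof.
apply: (@le_trans _ _ (\sum_(h : hashT m n) hash_weight f h * (Sh S h)%:R)).
  apply: ler_sum => h _; rewrite ler_wpM2l ?hash_weight_ge0 // ler_nat.
  by case: (Sh S h).
under eq_bigr do rewrite Sh_sum mulr_sumr.
rewrite exchange_big /=; under eq_bigr do rewrite hash_zero_prob.
by rewrite sumr_const mulr_natl.
Qed.

End HashDistribution.

Section Sampling.
Variables (R : realType) (f : R) (m n T : nat).
Hypotheses (f_ge0 : 0 <= f) (f_le1 : f <= 1).
Local Notation sample := (sampleT m n T).

Lemma sum_sample_weight_prod (g : hashT m n -> R) :
  \sum_(w : sample) sample_weight f w * \prod_(k < T) g (w k)
  = (\sum_(h : hashT m n) hash_weight f h * g h) ^+ T.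
Proof.
rewrite -[in RHS](card_ord T) -prodr_const bigA_distr_bigA.
by apply: eq_bigr => w _; rewrite /sample_weight -big_split.
Qed.

Lemma sample_weight_ge0 (w : sample) : 0 <= sample_weight f w.
Proof. by apply: prodr_ge0 => k _; exact: hash_weight_ge0. Qed.

Lemma PrT_predT : PrT f (@predT sample) = 1.
Proof.
have := sum_sample_weight_prod (fun=> 1).
under [X in _ = X ^+ _]eq_bigr do rewrite mulr1.
rewrite sum_hash_weight // expr1n => <-.
by apply: eq_bigr => w _; rewrite prodr_const expr1n mulr1.
Qed.

Lemma PrT_predC (E : pred sample) : PrT f (predC E) = 1 - PrT f E.
Proof. by rewrite -PrT_predT /PrT [in RHS](bigID E) /= addrAC subrr add0r. Qed.

Lemma PrT_subpred (E1 E2 : pred sample) : subpred E1 E2 -> PrT f E1 <= PrT f E2.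
Proof.
move=> E12; rewrite /PrT [leRHS](bigID E1) /=.
rewrite [leLHS](eq_bigl (fun w => E2 w && E1 w)) => [|w]; last first.
  by case E1w: (E1 w); rewrite ?andbT ?andbF ?E12.
by rewrite lerDl; apply: sumr_ge0 => w _; exact: sample_weight_ge0.
Qed.

Lemma PrT_markov (E : pred sample) (g : sample -> R) :
    (forall w, 0 <= g w) -> (forall w, E w -> 1 <= g w) ->
  PrT f E <= \sum_(w : sample) sample_weight f w * g w.
Proof.
move=> g_ge0 g_ge1; rewrite [leRHS](bigID E) /= -[PrT f E]addr0.
apply: lerD; last by apply: sumr_ge0 => w _; rewrite mulr_ge0 ?sample_weight_ge0.
by apply: ler_sum => w Ew; rewrite ler_peMr ?sample_weight_ge0 ?g_ge1.
Qed.

Lemma sum_sample_weight_expYcount (S : {set vec n}) (a : R) :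
  \sum_(w : sample) sample_weight f w * a ^+ Ycount S w
  = (1 + (a - 1) * hit_prob f m S) ^+ T.
Proof.
under eq_bigr do rewrite /Ycount expr_sum.
rewrite (sum_sample_weight_prod (fun h => a ^+ (0 < Sh S h)%N)); congr (_ ^+ _).
transitivity (\sum_(h : hashT m n)
    (hash_weight f h + (a - 1) * (hash_weight f h * (0 < Sh S h)%N%:R))).
  by apply: eq_bigr => h _; case: (0 < Sh S h)%N; rewrite /= ?expr1 ?expr0; ring.
by rewrite big_split /= sum_hash_weight // -mulr_sumr.
Qed.

Lemma Ycount_upper_tail (S : {set vec n}) (kappa c : R) :
    0 <= kappa -> hit_prob f m S <= c / (1 + kappa) ->
  PrT f (fun w : sample => c * T%:R <= (Ycount S w)%:R)
  <= expR (- (kappa ^+ 2 * c * T%:R / ((1 + kappa) * (2 + kappa)))).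
Proof.
move=> kappa_ge0 hit_le.
pose q := 2 * kappa / (2 + kappa).
have q_ge0 : 0 <= q by rewrite divr_ge0 //; lra.
pose g (w : sample) := (1 + kappa) ^+ Ycount S w / expR (c * T%:R * q).
apply: (@le_trans _ _ (\sum_(w : sample) sample_weight f w * g w)).
  apply: PrT_markov => w /=.
    by rewrite divr_ge0 ?exprn_ge0 ?expR_ge0 //; lra.
  move=> tail; rewrite ler_pdivlMr ?expR_gt0 // mul1r.
  apply: (@le_trans _ _ (expR q ^+ Ycount S w)).
    by rewrite -expRM_natl ler_expR ler_wpM2r.
  by apply: lerXn2r; rewrite ?nnegrE ?expR_ge0 ?expR_le1D //; lra.
under eq_bigr do rewrite /g mulrA.
rewrite -mulr_suml sum_sample_weight_expYcount addrAC subrr add0r.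
have hit_ge0 : 0 <= hit_prob f m S by exact: hit_prob_ge0.
have -> : expR (- (kappa ^+ 2 * c * T%:R / ((1 + kappa) * (2 + kappa))))
    = expR (T%:R * (kappa * (c / (1 + kappa)))) / expR (c * T%:R * q).
  by rewrite -expRB /q; congr expR; field; lra.
rewrite ler_pM2r ?invr_gt0 ?expR_gt0 //.
apply: (@le_trans _ _ (expR (kappa * hit_prob f m S) ^+ T)).
  by apply: lerXn2r; rewrite ?nnegrE ?expR_ge0 ?expR_ge1Dx ?addr_ge0 ?mulr_ge0.
by rewrite -expRM_natl ler_expR ler_wpM2l ?ler_wpM2l.
Qed.

End Sampling.

Theorem theorem3 (R : realType) (n m T : nat) (S : {set 'cV['F_2]_n})
  (f kappa c : R) :
  (0 < m)%N -> (m <= n)%N -> (0 < T)%N ->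
  0 <= f -> f <= 1 / 2 -> 0 < kappa -> 0 < c ->
  PrT f (fun w : sampleT m n T => Bvar S kappa c w <= (#|S|)%:R)
  >= 1 - expR (- (kappa ^+ 2 * c * T%:R / ((1 + kappa) * (2 + kappa)))).
Proof.
move=> _ _ T_gt0 f_ge0 f_le_half kappa_gt0 _.
have f_le1 : f <= 1 by lra.
have [S_large | S_small] := lerP (2 ^+ m * c / (1 + kappa)) #|S|%:R.
  apply: (@le_trans _ _ (PrT f predT)); first by rewrite PrT_predT gerBl expR_ge0.
  by apply: PrT_subpred => // w _; rewrite /Bvar; case: ifP => _ //; rewrite ler0n.
have hit_small : hit_prob f m S <= c / (1 + kappa).
  apply: le_trans (hit_prob_le m f_ge0 f_le1 S) _.
  by rewrite ler_pdivrMr ?exprn_gt0 // mulrAC [c * _]mulrC ltW.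
pose tail (w : sampleT m n T) := c * T%:R <= (Ycount S w)%:R.
apply: (@le_trans _ _ (PrT f (predC tail))).
  by rewrite PrT_predC lerD2l lerN2 Ycount_upper_tail // ltW.
apply: PrT_subpred => // w /= /negP not_tail; rewrite /Bvar /Pr_est.
case: ifP => [|_]; last by rewrite ler0n.
by rewrite ler_pdivlMr ?ltr0n // => /not_tail.
Qed.
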